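(* Let $0<p<1/2$ be a constant and let $T$ be a tree with $n$ edges accessed through a 2-sided noisy oracle with error probability $p$. Consider the following algorithm, run with parameters $\varepsilon=\delta=0.01$: set $c=\lceil \log_{\frac{1-p}{p}}(1/\delta)\rceil$ and a global budget $B=\lceil \frac{1}{\varepsilon}\cdot\frac{1}{1-2p}\rceil\cdot c\cdot n$; process the edges of $T$ in a fixed order; for the current edge, starting a counter at $0$, while the counter is $<c$ and $B>0$, query the edge, decrease $B$ by $1$, and add $+1$ to the counter on ``Yes'' and $-1$ on ``No''; after the loop, if $B=0$ output False and stop, otherwise continue to the next edge; if all edges are processed output True. Then this algorithm outputs True on connected trees with probability at least $0.99$, outputs False on disconnected trees with probability at least $0.99$, and uses $O(n)$ queries.
   Context: Noisy edge-query model: each edge is either realized or non-realized (fixed arbitrarily in advance). An oracle answers queries ``Is edge $e$ realized?'' with ``Yes''/``No''; each query costs $1$; answers to distinct queries (including repeated queries of the same edge) are independent. In the 2-sided error regime each answer is wrong with probability $p<1/2$ (a constant) and correct with probability $1-p$. A tree is connected if all its edges are realized and disconnected otherwise. *)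

From HB Require Import structures.
From mathcomp Require Import all_boot all_order all_algebra.
From mathcomp Require Import reals exp.
Set Implicit Arguments. Unset Strict Implicit. Unset Printing Implicit Defensive.
Import Order.TTheory GRing.Theory Num.Theory.
Local Open Scope ring_scope.

(* A tree on the finite vertex type V, given by its list of edges E (2-element
   vertex sets), in the fixed order in which the algorithm processes them. *)
Definition tree_adj (V : finType) (E : seq {set V}) : rel V :=
  fun x y => (x != y) && has (fun e : {set V} => (x \in e) && (y \in e)) E.

Definition is_tree (V : finType) (E : seq {set V}) : Prop :=
  [/\ uniq E, all (fun e : {set V} => #|e| == 2)%N E, #|V| = (size E).+1
    & forall x y : V, connect (tree_adj E) x y].

(* r e = true iff edge e is realized; the tree is connected iff all its edges
   are realized. *)
Definition tree_connected (V : finType) (E : seq {set V}) (r : {set V} -> bool)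
  : bool := all r E.

Section Params.
Variable R : realType.

Definition c_param (p delta : R) : nat :=
  `|Num.ceil (ln (delta^-1) / ln ((1 - p) / p))|%N.

Definition budget (p eps delta : R) (n : nat) : nat :=
  (`|Num.ceil (eps^-1 * (1 - 2 * p)^-1)| * c_param p delta * n)%N.
End Params.

(* ans k = answer (true = "Yes") to the k-th query overall (k = 0,1,...).
   Inner loop on one edge: state = remaining budget, index of next query,
   counter.  Returns (remaining budget, index of next query). *)
Fixpoint edge_loop (c : nat) (ans : nat -> bool) (fuel k : nat) (cnt : int)
  : nat * nat :=
  if (cnt < c%:Z)%R then
    match fuel with
    | 0 => (0%N, k)
    | fuel'.+1 => edge_loop c ans fuel' k.+1 (if ans k then cnt + 1 else cnt - 1)
    end
  else (fuel, k).

(* answer k e = answer to the k-th query given that this query is about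
   edge e.  Returns (output, total number of queries made). *)
Fixpoint run_alg (V : finType) (c : nat) (answer : nat -> {set V} -> bool)
  (Es : seq {set V}) (fuel k : nat) : bool * nat :=
  match Es with
  | [::] => (true, k)
  | e :: Es' =>
      let (fuel', k') := edge_loop c (fun j => answer j e) fuel k 0 in
      if fuel' == 0%N then (false, k') else run_alg c answer Es' fuel' k'
  end.

(* Since the algorithm never makes more than B queries, the randomness of
   the oracle is a vector of B independent error bits: the k-th answer is
   wrong iff bit k is set; each bit is set with probability p. *)
Definition err_bit (B : nat) (w : {ffun 'I_B -> bool}) (k : nat) : bool :=
  if insub k is Some i then w i else false.

Definition noisy_answer (V : finType) (r : {set V} -> bool) (B : nat)
  (w : {ffun 'I_B -> bool}) (k : nat) (e : {set V}) : bool :=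
  r e (+) err_bit w k.

Definition weight (R : realType) (p : R) (B : nat) (w : {ffun 'I_B -> bool}) : R :=
  \prod_(i < B) (if w i then p else 1 - p).

Definition Pr (R : realType) (p : R) (B : nat) (ev : {ffun 'I_B -> bool} -> bool)
  : R := \sum_(w : {ffun 'I_B -> bool}) weight p w * (ev w)%:R.

Definition algo (R : realType) (p eps delta : R) (V : finType)
  (E : seq {set V}) (r : {set V} -> bool)
  (w : {ffun 'I_(budget p eps delta (size E)) -> bool}) : bool * nat :=
  run_alg (c_param p delta) (noisy_answer r w) E (budget p eps delta (size E)) 0.
Arguments algo {R} p eps delta {V} E r w.
Arguments Pr {R} p {B} ev.

(* On each edge the counter performs a random walk, moving towards the
   threshold c with probability 1 - p if the edge is realized and with
   probability p otherwise.  For a non-realized edge, q ^ (distance to c) with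
   q = p / (1 - p) is harmonic for this walk (gambler's ruin), so the counter
   reaches c with probability at most q ^ c <= delta: a disconnected tree is
   accepted with probability at most delta.  On a connected tree the algorithm
   fails only by exhausting its budget; since every query spends one unit of
   budget and advances the counter by 1 - 2p in expectation, the potential
   (total distance still to cover) / ((1 - 2p) * remaining budget) bounds the
   failure probability, by induction on the budget.  Initially it equals
   c n / ((1 - 2p) B) <= eps.  The query bound holds because the algorithm
   never exceeds its budget B = O(n). *)

From HB Require Import structures.
From mathcomp Require Import all_boot all_order all_algebra.
From mathcomp Require Import boolp reals exp.
From mathcomp Require Import ring lra zify.
Set Implicit Arguments. Unset Strict Implicit. Unset Printing Implicit Defensive.
Import Order.TTheory GRing.Theory Num.Theory.
Local Open Scope ring_scope.

Definition scons (b : bool) (s : nat -> bool) : nat -> bool :=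
  fun j => if j is j'.+1 then s j' else b.

Definition stail (s : nat -> bool) : nat -> bool := fun j => s j.+1.

Definition shift (T : Type) (s : nat -> T) (m : nat) : nat -> T := fun j => s (j + m)%N.

Section ErrorBits.
Variables (R : realType) (p : R).

(* Expectation over the error bits seen as a stream: n independent bits, each
   set with probability p, followed by zeros (the default value of err_bit). *)
Definition Ebits (n : nat) (F : (nat -> bool) -> R) : R :=
  \sum_(w : {ffun 'I_n -> bool}) weight p w * F (err_bit w).

Lemma Ebits_ext n (F G : (nat -> bool) -> R) :
  (forall s, F s = G s) -> Ebits n F = Ebits n G.
Proof. by move=> FG; congr Ebits; apply: funext. Qed.

Lemma Ebits0 (F : (nat -> bool) -> R) : Ebits 0 F = F (fun _ => false).
Proof.
have err_bit0 (w : {ffun 'I_0 -> bool}) : err_bit w = fun _ => false.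
  by apply: funext => k; rewrite /err_bit; case: insubP => // -[].
rewrite /Ebits (eq_bigr (fun _ => F (fun _ => false))) => [|w _]; last first.
  by rewrite /weight big_ord0 mul1r err_bit0.
by rewrite sumr_const card_ffun card_ord card_bool expn0.
Qed.

Definition ffun_cons n (bw : bool * {ffun 'I_n -> bool}) : {ffun 'I_n.+1 -> bool} :=
  [ffun i => if unlift ord0 i is Some j then bw.2 j else bw.1].

Definition ffun_uncons n (w : {ffun 'I_n.+1 -> bool}) : bool * {ffun 'I_n -> bool} :=
  (w ord0, [ffun j => w (lift ord0 j)]).

Lemma ffun_consK n : cancel (@ffun_cons n) (@ffun_uncons n).
Proof.
case=> b w; rewrite /ffun_uncons ffunE unlift_none; congr pair.
by apply/ffunP => j; rewrite !ffunE liftK.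
Qed.

Lemma ffun_unconsK n : cancel (@ffun_uncons n) (@ffun_cons n).
Proof.
move=> w; apply/ffunP => i; rewrite ffunE.
by case: unliftP => [j ->|->]; rewrite ?ffunE.
Qed.

Lemma err_bit_cons n b (w : {ffun 'I_n -> bool}) :
  err_bit (ffun_cons (b, w)) = scons b (err_bit w).
Proof.
apply: funext => -[|k]; rewrite /err_bit /=.
  by rewrite insubT //= ffunE; case: unliftP.
case: (ltnP k n) => [kn | nk]; last by rewrite !insubF // ?ltnS ltnNge nk.
rewrite (insubT (fun i => i < n.+1)%N (kn : k.+1 < n.+1)%N) insubT /= ffunE.
set i := Sub k.+1 _.
have -> : i = lift ord0 (Ordinal kn) by apply: val_inj.
by rewrite liftK.
Qed.

Lemma EbitsS n (F : (nat -> bool) -> R) :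
  Ebits n.+1 F = (1 - p) * Ebits n (F \o scons false) + p * Ebits n (F \o scons true).
Proof.
rewrite /Ebits (reindex (@ffun_cons n)); last first.
  by exists (@ffun_uncons n) => w _; [apply: ffun_consK | apply: ffun_unconsK].
rewrite -(pair_big xpredT xpredT
  (fun b w => weight p (ffun_cons (b, w)) * F (err_bit (ffun_cons (b, w))))) /=.
rewrite big_bool /= addrC !mulr_sumr; congr (_ + _); apply: eq_bigr => w _;
  rewrite err_bit_cons /weight big_ord_recl ffunE unlift_none mulrA; congr (_ * _ * _);
  by apply: eq_bigr => i _; rewrite ffunE liftK.
Qed.

Lemma Ebits_const n x : Ebits n (fun _ => x) = x.
Proof.
rewrite /Ebits -mulr_suml /weight.
rewrite -(bigA_distr_bigA (fun (_ : 'I_n) (b : bool) => if b then p else 1 - p)).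
by rewrite big1 ?mul1r // => i _; rewrite big_bool /= addrC subrK.
Qed.

Lemma EbitsD n (F G : (nat -> bool) -> R) :
  Ebits n (fun s => F s + G s) = Ebits n F + Ebits n G.
Proof. by rewrite /Ebits -big_split; apply: eq_bigr => w _; rewrite mulrDr. Qed.

Lemma Ebits_indicatorN n (P : (nat -> bool) -> bool) :
  Ebits n (fun s => (~~ P s)%:R) = 1 - Ebits n (fun s => (P s)%:R).
Proof.
apply/eqP; rewrite eq_sym subr_eq -EbitsD -[X in X == _](Ebits_const n); apply/eqP.
by apply: Ebits_ext => s; case: (P s); rewrite ?addr0 ?add0r.
Qed.

Hypothesis p01 : 0 <= p <= 1.

Lemma weight_ge0 n (w : {ffun 'I_n -> bool}) : 0 <= weight p w.
Proof. by case/andP: p01 => p0 p1; apply: prodr_ge0 => i _; case: (w i); lra. Qed.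

Lemma ler_Ebits n (F G : (nat -> bool) -> R) :
  (forall s, F s <= G s) -> Ebits n F <= Ebits n G.
Proof. by move=> FG; apply: ler_sum => w _; rewrite ler_wpM2l ?weight_ge0. Qed.

Lemma Ebits_indicator_le1 n (P : (nat -> bool) -> bool) :
  Ebits n (fun s => (P s)%:R) <= 1.
Proof.
by rewrite -[X in _ <= X](Ebits_const n); apply: ler_Ebits => s; case: (P s).
Qed.

(* For n = 0 the next bit is the default false, so only the branch bounded by x
   is taken; hence the requirement x <= y. *)
Lemma Ebits_le_mix n (F : (nat -> bool) -> R) (x y z : R) :
  Ebits n.-1 (F \o scons false) <= x -> Ebits n.-1 (F \o scons true) <= y ->
  x <= y -> (1 - p) * x + p * y <= z -> Ebits n F <= z.
Proof.
case/andP: p01 => p0 p1; case: n => [|n] /= Fx Fy xy mix; last first.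
  rewrite EbitsS; apply: le_trans mix; rewrite lerD // ler_wpM2l //; lra.
have scons_false0 : scons false (fun _ => false) = (fun _ => false).
  by apply: funext => -[].
move: Fx; rewrite !Ebits0 /= scons_false0 => Fx; nra.
Qed.

End ErrorBits.

Section Algorithm.
Variables (V : finType) (c : nat).

Lemma edge_loop_shift ans fuel k cnt :
  edge_loop c ans fuel k cnt =
  ((edge_loop c (shift ans k) fuel 0 cnt).1, ((edge_loop c (shift ans k) fuel 0 cnt).2 + k)%N).
Proof.
elim: fuel ans k cnt => [|f IH] ans k cnt /=; first by case: ifP.
case: ifP => // _; rewrite IH [in RHS]IH /= -addnA add1n.
have -> : shift (shift ans k) 1 = shift ans k.+1.
  by apply: funext => j; rewrite /shift addn1 addnS.
by rewrite addnS.
Qed.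

Lemma run_alg_shift (answer : nat -> {set V} -> bool) Es fuel k :
  run_alg c answer Es fuel k =
  ((run_alg c (shift answer k) Es fuel 0).1, ((run_alg c (shift answer k) Es fuel 0).2 + k)%N).
Proof.
elim: Es answer fuel k => [|e Es IH] answer fuel k //=.
rewrite edge_loop_shift; case: (edge_loop c _ fuel 0 0) => f k' /=.
case: ifP => // _; rewrite IH [in RHS]IH /= addnA.
have -> : shift answer (k' + k) = shift (shift answer k) k'.
  by apply: funext => j; rewrite /shift addnA.
done.
Qed.

Lemma edge_loop_queries ans fuel k cnt :
  ((edge_loop c ans fuel k cnt).1 + (edge_loop c ans fuel k cnt).2 = fuel + k)%N.
Proof.
elim: fuel k cnt => [|f IH] k cnt /=; first by case: ifP.
by case: ifP => // _; rewrite IH addSnnS.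
Qed.

Lemma run_alg_queries_le (answer : nat -> {set V} -> bool) Es fuel k :
  ((run_alg c answer Es fuel k).2 <= fuel + k)%N.
Proof.
elim: Es fuel k => [|e Es IH] fuel k /=; first exact: leq_addl.
have := edge_loop_queries (fun j => answer j e) fuel k 0.
case: (edge_loop c _ fuel k 0) => f k' /= <-.
by case: eqP => [->|_] //=; apply: IH.
Qed.

Variable r : {set V} -> bool.

Definition stream_answer (s : nat -> bool) (j : nat) (e : {set V}) : bool := r e (+) s j.

(* The output of the algorithm when it is inside the loop of an edge of
   realization [rb], with counter [c - d], remaining budget [fuel], the edges
   [Es] still to come and error bits [s] for the remaining queries. *)
Definition resume (Es : seq {set V}) (rb : bool) (fuel d : nat) (s : nat -> bool) : bool :=
  let: (fuel', k) := edge_loop c (fun j => rb (+) s j) fuel 0 (c%:Z - d%:Z) in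
  (fuel' != 0%N) && (run_alg c (stream_answer (shift s k)) Es fuel' 0).1.

Lemma run_alg_cons e Es fuel s :
  (run_alg c (stream_answer s) (e :: Es) fuel 0).1 = resume Es (r e) fuel c s.
Proof.
rewrite /resume /= subrr; case: (edge_loop c _ fuel 0 0) => f k.
by case: eqP => //= _; rewrite run_alg_shift.
Qed.

Lemma resume_done Es rb fuel s :
  resume Es rb fuel 0 s = (fuel != 0%N) && (run_alg c (stream_answer s) Es fuel 0).1.
Proof.
have shift_s0 : shift s 0 = s.
  by apply: funext => j; rewrite /shift addn0.
by rewrite /resume subr0; case: fuel => [|f] /=; rewrite ltxx ?shift_s0.
Qed.

Lemma resume_out_of_budget Es rb d s : resume Es rb 0 d.+1 s = false.
Proof. by rewrite /resume /= ltrBlDr ltrDl. Qed.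

Lemma resume_step Es rb f d s :
  resume Es rb f.+1 d.+1 s = resume Es rb f (if rb (+) s 0%N then d else d.+2) (stail s).
Proof.
have cnt_lt : c%:Z - d.+1%:Z < c%:Z by rewrite ltrBlDr ltrDl.
rewrite /resume /= cnt_lt edge_loop_shift.
have -> : (if rb (+) s 0%N then c%:Z - d.+1%:Z + 1 else c%:Z - d.+1%:Z - 1)
          = c%:Z - (if rb (+) s 0%N then d else d.+2)%:Z by case: ifP => _; lia.
have -> : shift (fun j => rb (+) s j) 1 = (fun j => rb (+) stail s j).
  by apply: funext => j; rewrite /shift addn1.
case: (edge_loop c _ f 0 _) => f' k /=.
have -> : shift s (k + 1) = shift (stail s) k.
  by apply: funext => j; rewrite /shift /stail addn1 addnS.
done.
Qed.

End Algorithm.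

Section Analysis.
Variables (R : realType) (p : R) (V : finType) (c : nat) (r : {set V} -> bool).

Local Notation q := (p / (1 - p)).

(* Gambler's ruin: d is the distance of the counter to c on a non-realized edge. *)
Lemma ruin_potential_step d : p != 1 -> (1 - p) * q ^+ d.+2 + p * q ^+ d = q ^+ d.+1.
Proof.
move=> p_neq1; have p1_neq0 : 1 - p != 0 by rewrite subr_eq0 eq_sym.
by rewrite !exprS; field.
Qed.

Lemma resume_accept_le (phi : R) Es :
  0 <= p <= 1 / 2 -> 0 <= phi ->
  (forall fuel n, Ebits p n (fun s => (run_alg c (stream_answer r s) Es fuel 0).1%:R) <= phi) ->
  forall rb fuel d n,
  Ebits p n (fun s => (resume c r Es rb fuel d s)%:R) <= if rb then phi else q ^+ d.
Proof.
move=> /andP[p_ge0 p_le_half] phi_ge0 Es_le rb fuel.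
have p01 : 0 <= p <= 1 by apply/andP; split; lra.
have q_ge0 : 0 <= q by apply: divr_ge0; lra.
have q_le1 : q <= 1 by rewrite ler_pdivrMr; lra.
elim: fuel rb => [|f IH] rb [|d] n.
- by under Ebits_ext => s do rewrite resume_done; rewrite Ebits_const; case: rb.
- under Ebits_ext => s do rewrite resume_out_of_budget.
  by rewrite Ebits_const; case: rb => //; exact: exprn_ge0.
- under Ebits_ext => s do rewrite resume_done /=.
  by case: rb; [exact: Es_le | rewrite expr0; exact: Ebits_indicator_le1].
case: rb.
- apply: (Ebits_le_mix p01 (x := phi) (y := phi)); last by lra.
  + by under Ebits_ext => s do rewrite /= resume_step; exact: IH.
  + by under Ebits_ext => s do rewrite /= resume_step; exact: IH.
  + done.
apply: (Ebits_le_mix p01 (x := q ^+ d.+2) (y := q ^+ d)).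
- by under Ebits_ext => s do rewrite /= resume_step; exact: IH.
- by under Ebits_ext => s do rewrite /= resume_step; exact: IH.
- by rewrite !exprS mulrA -[leRHS]mul1r ler_wpM2r ?exprn_ge0 // mulr_ile1.
- by rewrite ruin_potential_step //; apply/eqP; lra.
Qed.

Lemma reject_potential_step (X f : R) :
  p < 1 / 2 -> 0 < f -> X + 1 <= (1 - 2 * p) * (f + 1) ->
  (1 - p) * (X / ((1 - 2 * p) * f)) + p * ((X + 2) / ((1 - 2 * p) * f))
    <= (X + 1) / ((1 - 2 * p) * (f + 1)).
Proof.
move=> p_lt_half f_gt0 budget_large; have a_gt0 : 0 < 1 - 2 * p by lra.
have -> : (1 - p) * (X / ((1 - 2 * p) * f)) + p * ((X + 2) / ((1 - 2 * p) * f))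
          = (X + 1 - (1 - 2 * p)) / ((1 - 2 * p) * f).
  by field; rewrite !gt_eqF.
have f1_gt0 : 0 < f + 1 by lra.
rewrite ler_pdivrMr ?mulr_gt0 // mulrAC ler_pdivlMr ?mulr_gt0 //; nra.
Qed.

Lemma resume_reject_le (phi : R) Es :
  0 < p < 1 / 2 -> 0 <= phi ->
  (forall fuel n, (0 < fuel)%N ->
     Ebits p n (fun s => (~~ (run_alg c (stream_answer r s) Es fuel 0).1)%:R)
       <= phi / ((1 - 2 * p) * fuel%:R)) ->
  forall fuel d n, (0 < fuel)%N ->
  Ebits p n (fun s => (~~ resume c r Es true fuel d s)%:R)
    <= (d%:R + phi) / ((1 - 2 * p) * fuel%:R).
Proof.
move=> /andP[p_gt0 p_lt_half] phi_ge0 Es_le fuel.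
have p01 : 0 <= p <= 1 by apply/andP; split; lra.
have a_gt0 : 0 < 1 - 2 * p by lra.
elim: fuel => [|f IH] // [|d] n _.
  by under Ebits_ext => s do rewrite resume_done /=; rewrite add0r; exact: Es_le.
have [budget_small | budget_large] := ltrP ((1 - 2 * p) * f.+1%:R) (d.+1%:R + phi).
  apply: le_trans (Ebits_indicator_le1 _ _ _) _ => //.
  by rewrite ler_pdivlMr ?mul1r ?mulr_gt0 ?ltr0n //; lra.
have f_gt0 : (0 < f)%N.
  case: f {IH} budget_large => [|f] //=; rewrite mulr1 -natr1 => ?; exfalso.
  by have := ler0n R d; lra.
set X := d%:R + phi.
have X1 : d.+1%:R + phi = X + 1 by rewrite /X -natr1; ring.
have X2 : d.+2%:R + phi = X + 2 by rewrite /X -!natr1; ring.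
apply: (Ebits_le_mix p01 (x := X / ((1 - 2 * p) * f%:R)) (y := (X + 2) / ((1 - 2 * p) * f%:R))).
- by under Ebits_ext => s do rewrite /= resume_step; exact: IH.
- by under Ebits_ext => s do rewrite /= resume_step; rewrite -X2; exact: IH.
- by rewrite ler_pM2r ?invr_gt0 ?mulr_gt0 ?ltr0n //; lra.
rewrite X1 -[f.+1%:R]natr1; apply: reject_potential_step => //; first by rewrite ltr0n.
by rewrite natr1 -X1.
Qed.

Lemma run_alg_accept_le Es fuel n :
  0 <= p <= 1 / 2 ->
  Ebits p n (fun s => (run_alg c (stream_answer r s) Es fuel 0).1%:R)
    <= if all r Es then 1 else q ^+ c.
Proof.
move=> p_range; elim: Es fuel n => [|e Es IH] fuel n /=; first by rewrite Ebits_const.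
under Ebits_ext => s do rewrite run_alg_cons.
have bound_ge0 : 0 <= (if all r Es then 1 else q ^+ c).
  case: ifP => _ //; apply/exprn_ge0/divr_ge0; case/andP: p_range => ? ?; lra.
by have := resume_accept_le p_range bound_ge0 IH (r e) fuel c n; case: (r e).
Qed.

Lemma run_alg_reject_le Es fuel n :
  0 < p < 1 / 2 -> all r Es -> (0 < fuel)%N ->
  Ebits p n (fun s => (~~ (run_alg c (stream_answer r s) Es fuel 0).1)%:R)
    <= (c * size Es)%:R / ((1 - 2 * p) * fuel%:R).
Proof.
move=> p_range; elim: Es fuel n => [|e Es IH] fuel n /=.
  by move=> _ _; rewrite Ebits_const muln0 mul0r.
case/andP=> re rEs fuel_gt0; under Ebits_ext => s do rewrite run_alg_cons re.
rewrite mulnS natrD.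
exact: resume_reject_le p_range (ler0n _ _) (fun f m => IH f m rEs) fuel c n fuel_gt0.
Qed.

Lemma run_alg_reject_budget_le (N : nat) Es n :
  0 < p < 1 / 2 -> all r Es -> (0 < c)%N -> (0 < N)%N ->
  Ebits p n (fun s => (~~ (run_alg c (stream_answer r s) Es (N * c * size Es) 0).1)%:R)
    <= ((1 - 2 * p) * N%:R)^-1.
Proof.
move=> p_range rEs c_gt0 N_gt0.
have a_gt0 : 0 < 1 - 2 * p by case/andP: p_range => ? ?; lra.
case: (posnP (size Es)) => [/size0nil -> | Es_gt0].
  by rewrite /= Ebits_const ltW // invr_gt0 mulr_gt0 ?ltr0n.
have cEs_gt0 : (0 < c * size Es)%N by rewrite muln_gt0 c_gt0.
apply: le_trans (run_alg_reject_le n p_range rEs _) _; first by rewrite -mulnA muln_gt0 N_gt0.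
rewrite -mulnA [(N * _)%:R]natrM mulrA invfM mulrCA mulfV ?mulr1 //.
by rewrite pnatr_eq0 -lt0n.
Qed.

End Analysis.

Section ParameterChoice.
Variables (R : realType) (p : R).

Lemma absz_ceil_ge (x : R) : 0 <= x -> x <= (`|Num.ceil x|%N)%:R.
Proof.
move=> x_ge0; rewrite natr_absz ger0_norm; first exact: ceil_ge.
by rewrite ceil_ge0; lra.
Qed.

Lemma c_param_ge (delta : R) : 0 < p < 1 / 2 -> 0 < delta <= 1 ->
  ln delta^-1 / ln ((1 - p) / p) <= (c_param p delta)%:R.
Proof.
move=> /andP[p_gt0 p_lt_half] /andP[delta_gt0 delta_le1].
apply: absz_ceil_ge; apply: divr_ge0; apply: ln_ge0.
  by rewrite invf_ge1.
by rewrite ler_pdivlMr //; lra.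
Qed.

Lemma c_param_gt0 (delta : R) : 0 < p < 1 / 2 -> 0 < delta < 1 -> (0 < c_param p delta)%N.
Proof.
move=> p_range /andP[delta_gt0 delta_lt1].
have delta_range : 0 < delta <= 1 by rewrite delta_gt0 ltW.
have := c_param_ge p_range delta_range; case/andP: p_range => p_gt0 p_lt_half.
have ln_gt0' : 0 < ln delta^-1 / ln ((1 - p) / p).
  by apply: divr_gt0; apply: ln_gt0; [rewrite invf_gt1 | rewrite ltr_pdivlMr //; lra].
by rewrite lt0n; apply: contraTN => /eqP ->; rewrite -ltNge.
Qed.

Lemma expr_c_param_le (delta : R) : 0 < p < 1 / 2 -> 0 < delta <= 1 ->
  (p / (1 - p)) ^+ c_param p delta <= delta.
Proof.
move=> p_range delta_range; have c_ge := c_param_ge p_range delta_range.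
case/andP: p_range => p_gt0 p_lt_half; case/andP: delta_range => delta_gt0 _.
set y := (1 - p) / p in c_ge *; set c := c_param p delta in c_ge *.
have y_gt1 : 1 < y by rewrite ltr_pdivlMr //; lra.
have y_gt0 : 0 < y by lra.
have inv_delta_le : delta^-1 <= y ^+ c.
  rewrite -ler_ln ?posrE ?invr_gt0 ?exprn_gt0 // lnXn // -mulr_natr mulrC.
  by rewrite -ler_pdivrMr ?ln_gt0.
by rewrite -invf_div exprVn -[leRHS]invrK lef_pV2 ?posrE ?invr_gt0 ?exprn_gt0.
Qed.

Definition budget_factor (eps : R) : nat := `|Num.ceil (eps^-1 * (1 - 2 * p)^-1)|%N.

Lemma budget_factor_ge (eps : R) : p < 1 / 2 -> 0 < eps ->
  eps^-1 <= (1 - 2 * p) * (budget_factor eps)%:R.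
Proof.
move=> p_lt_half eps_gt0; have a_gt0 : 0 < 1 - 2 * p by lra.
rewrite -ler_pdivrMl // mulrC; apply: absz_ceil_ge.
by rewrite mulr_ge0 // invr_ge0 ltW.
Qed.

Lemma budget_factor_gt0 (eps : R) : p < 1 / 2 -> 0 < eps -> (0 < budget_factor eps)%N.
Proof.
move=> p_lt_half eps_gt0; have := budget_factor_ge p_lt_half eps_gt0.
by rewrite lt0n; apply: contraTN => /eqP ->; rewrite mulr0 -ltNge invr_gt0.
Qed.

Lemma inv_budget_factor_le (eps : R) : p < 1 / 2 -> 0 < eps ->
  ((1 - 2 * p) * (budget_factor eps)%:R)^-1 <= eps.
Proof.
move=> p_lt_half eps_gt0; have a_gt0 : 0 < 1 - 2 * p by lra.
rewrite -[leRHS]invrK lef_pV2 ?posrE ?invr_gt0 ?mulr_gt0 ?ltr0n ?budget_factor_gt0 //.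
exact: budget_factor_ge.
Qed.

End ParameterChoice.

Section Guarantees.
Variables (R : realType) (p eps delta : R) (V : finType) (E : seq {set V}) (r : {set V} -> bool).

Lemma budgetE : budget p eps delta (size E) = (budget_factor p eps * c_param p delta * size E)%N.
Proof. by []. Qed.

Lemma Pr_algoE (ev : bool -> bool) :
  Pr p (fun w => ev (algo p eps delta E r w).1)
  = Ebits p (budget p eps delta (size E)) (fun s =>
      (ev (run_alg (c_param p delta) (stream_answer r s) E (budget p eps delta (size E)) 0).1)%:R).
Proof. by []. Qed.

Lemma algo_complete : 0 < p < 1 / 2 -> 0 < eps -> 0 < delta < 1 -> all r E ->
  1 - eps <= Pr p (fun w => (algo p eps delta E r w).1).
Proof.
move=> p_range eps_gt0 delta_range Econ; case/andP: (p_range) => _ p_lt_half.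
rewrite (Pr_algoE id) budgetE -[leRHS](subKr 1) -Ebits_indicatorN lerD2l lerN2.
apply: le_trans (inv_budget_factor_le p_lt_half eps_gt0).
exact: run_alg_reject_budget_le p_range Econ
  (c_param_gt0 p_range delta_range) (budget_factor_gt0 p_lt_half eps_gt0).
Qed.

Lemma algo_sound : 0 < p < 1 / 2 -> 0 < delta <= 1 -> ~~ all r E ->
  1 - delta <= Pr p (fun w => ~~ (algo p eps delta E r w).1).
Proof.
move=> p_range delta_range Edis.
rewrite (Pr_algoE negb) Ebits_indicatorN lerD2l lerN2.
apply: le_trans (expr_c_param_le p_range delta_range).
have p_range' : 0 <= p <= 1 / 2 by case/andP: p_range => ? ?; apply/andP; lra.
by have := run_alg_accept_le (c_param p delta) r E _ _ p_range'; rewrite (negbTE Edis).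
Qed.

Lemma algo_queries_le w :
  ((algo p eps delta E r w).2 <= budget_factor p eps * c_param p delta * size E)%N.
Proof. by rewrite -budgetE -[X in (_ <= X)%N]addn0; exact: run_alg_queries_le. Qed.

End Guarantees.

Theorem corollary1 (R : realType) (p : R) (hp0 : 0 < p) (hp1 : p < 1 / 2) :
  exists K : R, forall (V : finType) (E : seq {set V}) (r : {set V} -> bool),
    is_tree E ->
    let eps := 1 / 100 : R in
    let delta := 1 / 100 : R in
    (tree_connected E r ->
       Pr p (fun w => (algo p eps delta E r w).1) >= 99 / 100) /\
    (~~ tree_connected E r ->
       Pr p (fun w => ~~ (algo p eps delta E r w).1) >= 99 / 100) /\
    (forall w, ((algo p eps delta E r w).2)%:R <= K * (size E)%:R).
Proof.
exists (budget_factor p (1 / 100) * c_param p (1 / 100))%:R => V E r _ /=.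
have p_range : 0 < p < 1 / 2 by apply/andP.
have eps_gt0 : 0 < 1 / 100 :> R by lra.
have delta_range : 0 < (1 / 100 : R) < 1 by apply/andP; lra.
split; [|split].
- by move=> Econ; apply: le_trans _ (algo_complete p_range eps_gt0 delta_range Econ); lra.
- move=> Edis; have delta_range' : 0 < (1 / 100 : R) <= 1 by apply/andP; lra.
  by apply: le_trans _ (algo_sound _ p_range delta_range' Edis); lra.
- by move=> w; rewrite -natrM ler_nat; exact: algo_queries_le.
Qed.
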